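(* Let $\mathcal{S}$ be either of the calculi $\mathcal{M}'_{2018}$ or $\mathcal{M}'^{-}_{2018}$ defined below. Let $\xi,\zeta$ be stoups, $\Pi,\Gamma_1,\Gamma_2$ finite sequences of tree terms, $A,C$ formulae and $\Xi(\cdot)$ a meta-formula context (all in the language of $\mathcal{S}$). If the sequents $\xi;\Pi\to A$ and $\Xi(\zeta;\Gamma_1,A,\Gamma_2)\to C$ are derivable in $\mathcal{S}$, then the sequent $\Xi(\xi,\zeta;\Gamma_1,\Pi,\Gamma_2)\to C$ is also derivable in $\mathcal{S}$.
   Context: Formulae are built from a countable set of variables and the constant $\mathbf{1}$ by the binary connectives $\backslash$, $/$, $\cdot$, $\wedge$, $\vee$ and the unary connectives $\langle\rangle$, $[]^{-1}$ (bracket modalities) and $!$ (subexponential). A stoup is a finite multiset of formulae ($\varnothing$ is the empty stoup). A tree term is either a formula or an expression $[\Xi]$ with $\Xi$ a meta-formula; a meta-formula is an expression $\zeta;\Gamma$ where $\zeta$ is a stoup and $\Gamma$ is a finite linearly ordered sequence of tree terms (the empty sequence is written $\Lambda$); $\varnothing;\Gamma$ is written simply $\Gamma$. Comma denotes both concatenation of sequences and multiset union of stoups; $\zeta,A$ is $\zeta$ with one more copy of $A$. A sequent is $\Xi\to C$ with $\Xi$ a meta-formula and $C$ a formula. $\Xi(\Theta)$ denotes a meta-formula with a designated occurrence of a meta-formula $\Theta$, which is either $\Xi$ itself or the content of some bracket $[\Theta]$ occurring at any depth in $\Xi$; $\Xi(\Theta')$ is the result of replacing that occurrence by $\Theta'$.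 Below $A,B,C,D,A_1,A_2$ are formulae, $\Gamma,\Delta,\Delta_i,\Gamma_i$ sequences of tree terms, $\zeta,\zeta',\zeta_i$ stoups, $\Xi$ a meta-formula. Common axioms and rules: axioms $A\to A$ and $\Lambda\to\mathbf 1$; ($/L$) from $\zeta_1;\Gamma\to B$ and $\Xi(\zeta_2;\Delta_1,C,\Delta_2)\to D$ infer $\Xi(\zeta_1,\zeta_2;\Delta_1,C/B,\Gamma,\Delta_2)\to D$; ($/R$) from $\zeta;\Gamma,B\to C$ infer $\zeta;\Gamma\to C/B$; ($\backslash L$) from $\zeta_1;\Gamma\to A$ and $\Xi(\zeta_2;\Delta_1,C,\Delta_2)\to D$ infer $\Xi(\zeta_1,\zeta_2;\Delta_1,\Gamma,A\backslash C,\Delta_2)\to D$; ($\backslash R$) from $\zeta;A,\Gamma\to C$ infer $\zeta;\Gamma\to A\backslash C$; ($\cdot L$) from $\Xi(\zeta;\Delta_1,A,B,\Delta_2)\to D$ infer $\Xi(\zeta;\Delta_1,A\cdot B,\Delta_2)\to D$; ($\cdot R$) from $\zeta_1;\Delta\to A$ and $\zeta_2;\Gamma\to B$ infer $\zeta_1,\zeta_2;\Delta,\Gamma\to A\cdot B$; ($\mathbf1 L$) from $\Xi(\zeta;\Delta_1,\Delta_2)\to A$ infer $\Xi(\zeta;\Delta_1,\mathbf1,\Delta_2)\to A$; ($\vee L$) from $\Xi(\zeta;\Delta_1,A_1,\Delta_2)\to C$ and $\Xi(\zeta;\Delta_1,A_2,\Delta_2)\to C$ infer $\Xi(\zeta;\Delta_1,A_1\vee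 A_2,\Delta_2)\to C$; ($\vee R_i$, $i=1,2$) from $\Xi\to A_i$ infer $\Xi\to A_1\vee A_2$; ($\wedge L_i$) from $\Xi(\zeta;\Delta_1,A_i,\Delta_2)\to C$ infer $\Xi(\zeta;\Delta_1,A_1\wedge A_2,\Delta_2)\to C$; ($\wedge R$) from $\Xi\to A_1$ and $\Xi\to A_2$ infer $\Xi\to A_1\wedge A_2$; ($[]^{-1}L$) from $\Xi(\zeta;\Delta_1,A,\Delta_2)\to B$ infer $\Xi(\zeta;\Delta_1,[[]^{-1}A],\Delta_2)\to B$; ($[]^{-1}R$) from $[\Xi]\to A$ infer $\Xi\to []^{-1}A$; ($\langle\rangle L$) from $\Xi(\zeta;\Delta_1,[A],\Delta_2)\to B$ infer $\Xi(\zeta;\Delta_1,\langle\rangle A,\Delta_2)\to B$; ($\langle\rangle R$) from $\Xi\to A$ infer $[\Xi]\to\langle\rangle A$; ($!L$) from $\Xi(\zeta,A;\Gamma_1,\Gamma_2)\to B$ infer $\Xi(\zeta;\Gamma_1,!A,\Gamma_2)\to B$; ($!P$) from $\Xi(\zeta;\Gamma_1,A,\Gamma_2)\to B$ infer $\Xi(\zeta,A;\Gamma_1,\Gamma_2)\to B$. The calculus $\mathcal{M}'_{2018}$ consists of the common axioms and rules together with ($!R'$) from $A;\Lambda\to B$ infer $A;\Lambda\to !B$ (the stoup consists of exactly one formula) and ($!C'$) from $\Xi(\zeta,A;\Gamma_1,[\zeta',A;\Gamma_2],\Gamma_3)\to B$ infer $\Xi(\zeta,A;\Gamma_1,[[\zeta';\Gamma_2]],\Gamma_3)\to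 B$. The calculus $\mathcal{M}'^{-}_{2018}$ (with Lambek's non-emptiness restriction) is $\mathcal{M}'_{2018}$ restricted to formulae not containing $\mathbf1$, without the axiom $\Lambda\to\mathbf1$ and the rule $\mathbf1L$, and with the side conditions: $\backslash R$ and $/R$ may be applied only if $\Gamma\neq\Lambda$ or $\zeta\neq\varnothing$; $!C'$ may be applied only if $\Gamma_2\neq\Lambda$ or $\zeta'\neq\varnothing$. Cut is not a rule of these calculi; ''derivable'' means derivable by the listed axioms and rules. *)

(* Calculi M'_2018 (restricted = false) and M'^-_2018 (restricted = true). *)
From Stdlib Require Import List Permutation Bool.
Import ListNotations.
Open Scope bool_scope.

Inductive formula : Type :=
| Var   : nat -> formula
| One   : formula
| Under : formula -> formula -> formula   (* Under A C = A \ C *)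
| Over  : formula -> formula -> formula   (* Over C B  = C / B *)
| Prod  : formula -> formula -> formula
| And   : formula -> formula -> formula
| Or    : formula -> formula -> formula
| Diam  : formula -> formula
| BoxInv : formula -> formula
| Bang  : formula -> formula.

(* stoup = list of formulae, read as a multiset (see rule d_perm) *)
Definition stoup := list formula.

Inductive tterm : Type :=
| TF : formula -> tterm
| TB : meta -> tterm
with meta : Type :=
| Meta : stoup -> list tterm -> meta.

(* contexts Xi(.) : the hole is the whole meta-formula or the content of a
   bracket at any depth *)
Inductive ctx : Type :=
| Hole : ctx
| InBr : stoup -> list tterm -> ctx -> list tterm -> ctx.

Fixpoint fill (c : ctx) (M : meta) : meta :=
  match c with
  | Hole => M
  | InBr z G1 c' G2 => Meta z (G1 ++ TB (fill c' M) :: G2)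
  end.

Definition br (M : meta) : meta := Meta [] [TB M].

Inductive deriv (b : bool) : meta -> formula -> Prop :=
| d_ax : forall A, deriv b (Meta [] [TF A]) A
| d_one : b = false -> deriv b (Meta [] []) One
| d_overL : forall c z1 z2 G D1 D2 B C D,
    deriv b (Meta z1 G) B ->
    deriv b (fill c (Meta z2 (D1 ++ TF C :: D2))) D ->
    deriv b (fill c (Meta (z1 ++ z2) (D1 ++ TF (Over C B) :: G ++ D2))) D
| d_overR : forall z G B C,
    (b = true -> G <> [] \/ z <> []) ->
    deriv b (Meta z (G ++ [TF B])) C ->
    deriv b (Meta z G) (Over C B)
| d_underL : forall c z1 z2 G D1 D2 A C D,
    deriv b (Meta z1 G) A ->
    deriv b (fill c (Meta z2 (D1 ++ TF C :: D2))) D ->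
    deriv b (fill c (Meta (z1 ++ z2) (D1 ++ G ++ TF (Under A C) :: D2))) D
| d_underR : forall z G A C,
    (b = true -> G <> [] \/ z <> []) ->
    deriv b (Meta z (TF A :: G)) C ->
    deriv b (Meta z G) (Under A C)
| d_prodL : forall c z D1 D2 A B D,
    deriv b (fill c (Meta z (D1 ++ TF A :: TF B :: D2))) D ->
    deriv b (fill c (Meta z (D1 ++ TF (Prod A B) :: D2))) D
| d_prodR : forall z1 z2 D G A B,
    deriv b (Meta z1 D) A -> deriv b (Meta z2 G) B ->
    deriv b (Meta (z1 ++ z2) (D ++ G)) (Prod A B)
| d_oneL : forall c z D1 D2 A,
    b = false ->
    deriv b (fill c (Meta z (D1 ++ D2))) A ->
    deriv b (fill c (Meta z (D1 ++ TF One :: D2))) A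
| d_orL : forall c z D1 D2 A1 A2 C,
    deriv b (fill c (Meta z (D1 ++ TF A1 :: D2))) C ->
    deriv b (fill c (Meta z (D1 ++ TF A2 :: D2))) C ->
    deriv b (fill c (Meta z (D1 ++ TF (Or A1 A2) :: D2))) C
| d_orR1 : forall M A1 A2, deriv b M A1 -> deriv b M (Or A1 A2)
| d_orR2 : forall M A1 A2, deriv b M A2 -> deriv b M (Or A1 A2)
| d_andL1 : forall c z D1 D2 A1 A2 C,
    deriv b (fill c (Meta z (D1 ++ TF A1 :: D2))) C ->
    deriv b (fill c (Meta z (D1 ++ TF (And A1 A2) :: D2))) C
| d_andL2 : forall c z D1 D2 A1 A2 C,
    deriv b (fill c (Meta z (D1 ++ TF A2 :: D2))) C ->
    deriv b (fill c (Meta z (D1 ++ TF (And A1 A2) :: D2))) C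
| d_andR : forall M A1 A2,
    deriv b M A1 -> deriv b M A2 -> deriv b M (And A1 A2)
| d_boxL : forall c z D1 D2 A B,
    deriv b (fill c (Meta z (D1 ++ TF A :: D2))) B ->
    deriv b (fill c (Meta z (D1 ++ TB (Meta [] [TF (BoxInv A)]) :: D2))) B
| d_boxR : forall M A, deriv b (br M) A -> deriv b M (BoxInv A)
| d_diamL : forall c z D1 D2 A B,
    deriv b (fill c (Meta z (D1 ++ TB (Meta [] [TF A]) :: D2))) B ->
    deriv b (fill c (Meta z (D1 ++ TF (Diam A) :: D2))) B
| d_diamR : forall M A, deriv b M A -> deriv b (br M) (Diam A)
| d_bangL : forall c z G1 G2 A B,
    deriv b (fill c (Meta (z ++ [A]) (G1 ++ G2))) B ->
    deriv b (fill c (Meta z (G1 ++ TF (Bang A) :: G2))) B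
| d_bangP : forall c z G1 G2 A B,
    deriv b (fill c (Meta z (G1 ++ TF A :: G2))) B ->
    deriv b (fill c (Meta (z ++ [A]) (G1 ++ G2))) B
| d_bangR : forall A B,
    deriv b (Meta [A] []) B -> deriv b (Meta [A] []) (Bang B)
| d_bangC : forall c z z' G1 G2 G3 A B,
    (b = true -> G2 <> [] \/ z' <> []) ->
    deriv b (fill c (Meta (z ++ [A]) (G1 ++ TB (Meta (z' ++ [A]) G2) :: G3))) B ->
    deriv b (fill c (Meta (z ++ [A]) (G1 ++ TB (br (Meta z' G2)) :: G3))) B
| d_perm : forall c z z' G B,
    Permutation z z' ->
    deriv b (fill c (Meta z G)) B ->
    deriv b (fill c (Meta z' G)) B.

Fixpoint onefree (A : formula) : bool :=
  match A with
  | Var _ => true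
  | One => false
  | Under A B | Over A B | Prod A B | And A B | Or A B => onefree A && onefree B
  | Diam A | BoxInv A | Bang A => onefree A
  end.

Fixpoint tt_onefree (t : tterm) : bool :=
  match t with
  | TF A => onefree A
  | TB (Meta z G) =>
      forallb onefree z &&
      (fix go (l : list tterm) : bool :=
         match l with [] => true | t' :: l' => tt_onefree t' && go l' end) G
  end.

Definition meta_onefree (M : meta) : bool :=
  match M with Meta z G => forallb onefree z && forallb tt_onefree G end.

Definition derivable (restricted : bool) (M : meta) (C : formula) : Prop :=
  (restricted = true -> meta_onefree M = true /\ onefree C = true) /\
  deriv restricted M C.

(* For fixed A the
   right premise is processed by induction on its derivation, replacing the
   occurrence of A by Π and adding ξ to the stoup of the enclosing
   meta-formula.  When that occurrence becomes principal, the last left rules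
   of the left premise are permuted below the cut until A is principal there
   as well, and the principal reductions cut only on immediate subformulas of A.
   The exception is !A: cutting [B];Λ → !A against an instance of !L means
   replacing the stoup formula A by B throughout the derivation, where !C' may
   have copied A into many brackets and every use of a copy by !P becomes a cut
   on A.  In the restricted calculus every derivable meta-formula is non-empty
   at all depths; hence ξ;Π is non-empty and the side conditions of /R, \R and
   !C' survive the substitution. *)

From Stdlib Require Import List Permutation Bool PeanoNat Lia.
Import ListNotations.

Definition formula_eq_dec (x y : formula) : {x = y} + {x <> y}.
Proof. decide equality; apply Nat.eq_dec. Defined.

Fixpoint copies (k : nat) (xi : stoup) : stoup :=
  match k with 0 => [] | S k => xi ++ copies k xi end.

Lemma copies_add k l xi : copies (k + l) xi = copies k xi ++ copies l xi.
Proof. induction k as [|k IH]; simpl; [reflexivity | now rewrite IH, app_assoc]. Qed.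

Ltac stoup_perm :=
  repeat progress (rewrite ?copies_add; cbn [copies]);
  apply (Permutation_count_occ formula_eq_dec); intro;
  rewrite ?count_occ_app; simpl; rewrite ?count_occ_app;
  repeat match goal with
  | |- context [if formula_eq_dec ?a ?x then _ else _] => destruct (formula_eq_dec a x)
  end; lia.

Ltac list_eq := repeat (progress (simpl; rewrite <- ?app_assoc, ?app_nil_r)); reflexivity.

Fixpoint ctx_comp (c c' : ctx) : ctx :=
  match c with
  | Hole => c'
  | InBr z G1 c0 G2 => InBr z G1 (ctx_comp c0 c') G2
  end.

Lemma fill_comp c c' M : fill (ctx_comp c c') M = fill c (fill c' M).
Proof. induction c; simpl; congruence. Qed.

(** * Non-emptiness in the restricted calculus *)

Inductive nonempty_meta : meta -> Prop :=
| nonempty_intro z L :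
    (L <> [] \/ z <> []) -> nonempty_terms L -> nonempty_meta (Meta z L)
with nonempty_terms : list tterm -> Prop :=
| nonempty_nil : nonempty_terms []
| nonempty_formula X L : nonempty_terms L -> nonempty_terms (TF X :: L)
| nonempty_bracket M L :
    nonempty_meta M -> nonempty_terms L -> nonempty_terms (TB M :: L).

Lemma nonempty_terms_app L1 L2 :
  nonempty_terms (L1 ++ L2) <-> nonempty_terms L1 /\ nonempty_terms L2.
Proof.
  induction L1 as [|[X|M] L1 IH]; simpl; split.
  - split; [constructor | assumption].
  - tauto.
  - inversion 1; subst. apply IH in H1 as []. split; [constructor|]; assumption.
  - intros [H1 H2]. inversion H1; subst. constructor. apply IH; auto.
  - inversion 1; subst. apply IH in H3 as []. split; [constructor|]; assumption.
  - intros [H1 H2]. inversion H1; subst. constructor; [|apply IH]; auto.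
Qed.

Lemma nonempty_fill_inv c M : nonempty_meta (fill c M) -> nonempty_meta M.
Proof.
  induction c; simpl; auto. inversion 1 as [z L _ HL]; subst.
  apply nonempty_terms_app in HL as [_ HL]. inversion HL; auto.
Qed.

Lemma nonempty_fill c M M' :
  nonempty_meta (fill c M) -> nonempty_meta M' -> nonempty_meta (fill c M').
Proof.
  induction c; simpl; auto. inversion 1 as [z L _ HL]; subst. intro HM'.
  apply nonempty_terms_app in HL as [HL1 HL2]. inversion HL2; subst.
  constructor.
  - left. intro E. apply app_eq_nil in E as [_ E]. discriminate.
  - apply nonempty_terms_app. split; [|constructor]; auto.
Qed.

Ltac nonempty_split :=
  repeat match goal with
  | H : nonempty_meta (fill _ _) |- _ => apply nonempty_fill_inv in H
  | H : nonempty_meta (Meta _ _) |- _ => inversion H; subst; clear H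
  | H : nonempty_meta (br _) |- _ => inversion H; subst; clear H
  | H : nonempty_terms (_ ++ _) |- _ => apply nonempty_terms_app in H as [? ?]
  | H : nonempty_terms (_ :: _) |- _ => inversion H; subst; clear H
  end.

Ltac nonempty_build :=
  repeat first
    [ assumption
    | left; let E := fresh "E" in
      intro E; repeat (apply app_eq_nil in E as [_ E]); discriminate
    | right; let E := fresh "E" in
      intro E; repeat (apply app_eq_nil in E as [_ E]); discriminate
    | apply nonempty_terms_app; split
    | apply nonempty_intro | apply nonempty_nil
    | apply nonempty_formula | apply nonempty_bracket ].

Lemma deriv_nonempty M C : deriv true M C -> nonempty_meta M.
Proof.
  induction 1; try discriminate;
    try match goal with
    | IH : nonempty_meta (fill ?c _) |- nonempty_meta (fill ?c _) =>
        apply (nonempty_fill _ _ _ IH)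
    end;
    nonempty_split; nonempty_build.
  all: match goal with
  | H : true = true -> ?P |- ?P => exact (H eq_refl)
  | H : ?D <> [] \/ ?z1 <> [] |- ?D ++ _ <> [] \/ ?z1 ++ _ <> [] =>
      destruct H as [H|H]; [left|right]; intro E; apply app_eq_nil in E as [E _]; auto
  | H : ?G <> [] \/ ?z <> [], P : Permutation ?z ?z' |- ?G <> [] \/ ?z' <> [] =>
      destruct H as [H|H];
      [left; exact H | right; intro E; subst; apply H, Permutation_nil, Permutation_sym, P]
  end.
Qed.

Section Calculus.

Variable b : bool.

Lemma deriv_fill_perm c z z' L L' C :
  deriv b (fill c (Meta z L)) C -> Permutation z z' -> L = L' ->
  deriv b (fill c (Meta z' L')) C.
Proof. intros H P <-. eapply d_perm; eassumption. Qed.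

Ltac exact_perm H :=
  lazymatch goal with
  | |- deriv _ (fill _ _) _ => eapply deriv_fill_perm
  | _ => eapply (deriv_fill_perm Hole)
  end; [exact H | stoup_perm | list_eq].

Definition cut_into (Xi : ctx) (zeta : stoup) (G1 G2 : list tterm) (M : meta) : meta :=
  match M with Meta xi Pi => fill Xi (Meta (xi ++ zeta) (G1 ++ Pi ++ G2)) end.

Lemma cut_into_fill Xi zeta G1 G2 c : exists c' s P1 P2, forall z L,
  cut_into Xi zeta G1 G2 (fill c (Meta z L)) = fill c' (Meta (z ++ s) (P1 ++ L ++ P2)).
Proof.
  destruct c as [|z0 L1 c L2].
  - exists Xi, zeta, G1, G2; reflexivity.
  - exists (ctx_comp Xi (InBr (z0 ++ zeta) (G1 ++ L1) c (L2 ++ G2))), [], [], [].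
    intros z L; simpl. rewrite fill_comp, !app_nil_r. simpl. now rewrite <- !app_assoc.
Qed.

Definition cut_closed (Q : ctx -> stoup -> list tterm -> list tterm -> formula -> Prop)
  (M : meta) : Prop :=
  forall Xi zeta G1 G2 C, Q Xi zeta G1 G2 C -> deriv b (cut_into Xi zeta G1 G2 M) C.

Inductive ends_right : meta -> formula -> Prop :=
| er_ax A : ends_right (Meta [] [TF A]) A
| er_one : b = false -> ends_right (Meta [] []) One
| er_overR z G B C : (b = true -> G <> [] \/ z <> []) ->
    deriv b (Meta z (G ++ [TF B])) C -> ends_right (Meta z G) (Over C B)
| er_underR z G A C : (b = true -> G <> [] \/ z <> []) ->
    deriv b (Meta z (TF A :: G)) C -> ends_right (Meta z G) (Under A C)
| er_prodR z1 z2 D G A B : deriv b (Meta z1 D) A -> deriv b (Meta z2 G) B ->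
    ends_right (Meta (z1 ++ z2) (D ++ G)) (Prod A B)
| er_orR1 M A1 A2 : deriv b M A1 -> ends_right M (Or A1 A2)
| er_orR2 M A1 A2 : deriv b M A2 -> ends_right M (Or A1 A2)
| er_andR M A1 A2 : deriv b M A1 -> deriv b M A2 -> ends_right M (And A1 A2)
| er_boxR M A : deriv b (br M) A -> ends_right M (BoxInv A)
| er_diamR M A : deriv b M A -> ends_right (br M) (Diam A)
| er_bangR A B : deriv b (Meta [A] []) B -> ends_right (Meta [A] []) (Bang B).

Lemma ends_right_sound M A : ends_right M A -> deriv b M A.
Proof. destruct 1; [ apply d_ax | .. ]; eauto using deriv. Qed.

Ltac exact_perm_hyp :=
  match goal with
  | H : deriv _ _ _ |- _ => eapply deriv_fill_perm; [exact H | | list_eq]; stoup_perm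
  end.

Ltac reframe rule :=
  eapply deriv_fill_perm; [eapply rule | | list_eq];
  [first [assumption | exact_perm_hyp] .. | stoup_perm].

Lemma left_rules_commute A Q :
  (forall M, ends_right M A -> cut_closed Q M) ->
  forall M, deriv b M A -> cut_closed Q M.
Proof.
  intros Hright M HM. remember A as A0 eqn:EA in HM.
  induction HM; subst; try (apply Hright; econstructor; eauto; fail);
    intros Xi zeta P1 P2 C0 HQ;
    match goal with |- deriv _ (cut_into _ _ _ _ (fill ?c _)) _ =>
      destruct (cut_into_fill Xi zeta P1 P2 c) as (c' & s & Q1 & Q2 & E) end;
    rewrite E;
    repeat match goal with
    | IH : ?x = ?x -> cut_closed Q _ |- _ =>
        specialize (IH eq_refl Xi zeta P1 P2 C0 HQ); rewrite E in IH
    end.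
  - reframe (d_overL b c' z1 (z2 ++ s) G (Q1 ++ D1) (D2 ++ Q2)).
  - reframe (d_underL b c' z1 (z2 ++ s) G (Q1 ++ D1) (D2 ++ Q2)).
  - reframe (d_prodL b c' (z ++ s) (Q1 ++ D1) (D2 ++ Q2)).
  - reframe (d_oneL b c' (z ++ s) (Q1 ++ D1) (D2 ++ Q2)).
  - reframe (d_orL b c' (z ++ s) (Q1 ++ D1) (D2 ++ Q2)).
  - reframe (d_andL1 b c' (z ++ s) (Q1 ++ D1) (D2 ++ Q2)).
  - reframe (d_andL2 b c' (z ++ s) (Q1 ++ D1) (D2 ++ Q2)).
  - reframe (d_boxL b c' (z ++ s) (Q1 ++ D1) (D2 ++ Q2)).
  - reframe (d_diamL b c' (z ++ s) (Q1 ++ D1) (D2 ++ Q2)).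
  - reframe (d_bangL b c' (z ++ s) (Q1 ++ G1) (G2 ++ Q2)).
  - reframe (d_bangP b c' (z ++ s) (Q1 ++ G1) (G2 ++ Q2)).
  - reframe (d_bangC b c' (z ++ s) z' (Q1 ++ G1) G2 (G3 ++ Q2)).
  - eapply deriv_fill_perm; [eassumption | apply Permutation_app_tail; assumption | reflexivity].
Qed.

Inductive principal_left : formula -> ctx -> stoup -> list tterm -> list tterm -> formula -> Prop :=
| pl_ax A : principal_left A Hole [] [] [] A
| pl_over c z1 z2 G D1 D2 B C D : deriv b (Meta z1 G) B ->
    deriv b (fill c (Meta z2 (D1 ++ TF C :: D2))) D ->
    principal_left (Over C B) c (z1 ++ z2) D1 (G ++ D2) D
| pl_under c z1 z2 G D1 D2 A C D : deriv b (Meta z1 G) A ->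
    deriv b (fill c (Meta z2 (D1 ++ TF C :: D2))) D ->
    principal_left (Under A C) c (z1 ++ z2) (D1 ++ G) D2 D
| pl_prod c z D1 D2 A B D : deriv b (fill c (Meta z (D1 ++ TF A :: TF B :: D2))) D ->
    principal_left (Prod A B) c z D1 D2 D
| pl_one c z D1 D2 A : b = false -> deriv b (fill c (Meta z (D1 ++ D2))) A ->
    principal_left One c z D1 D2 A
| pl_or c z D1 D2 A1 A2 C : deriv b (fill c (Meta z (D1 ++ TF A1 :: D2))) C ->
    deriv b (fill c (Meta z (D1 ++ TF A2 :: D2))) C ->
    principal_left (Or A1 A2) c z D1 D2 C
| pl_and1 c z D1 D2 A1 A2 C : deriv b (fill c (Meta z (D1 ++ TF A1 :: D2))) C ->
    principal_left (And A1 A2) c z D1 D2 C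
| pl_and2 c z D1 D2 A1 A2 C : deriv b (fill c (Meta z (D1 ++ TF A2 :: D2))) C ->
    principal_left (And A1 A2) c z D1 D2 C
| pl_box c z D1 D2 A B : deriv b (fill c (Meta z (D1 ++ TF A :: D2))) B ->
    principal_left (BoxInv A) (ctx_comp c (InBr z D1 Hole D2)) [] [] [] B
| pl_diam c z D1 D2 A B : deriv b (fill c (Meta z (D1 ++ TB (Meta [] [TF A]) :: D2))) B ->
    principal_left (Diam A) c z D1 D2 B
| pl_bang c z G1 G2 A B : deriv b (fill c (Meta (z ++ [A]) (G1 ++ G2))) B ->
    principal_left (Bang A) c z G1 G2 B.

Lemma principal_left_sound A Xi zeta G1 G2 C :
  principal_left A Xi zeta G1 G2 C -> deriv b (fill Xi (Meta zeta (G1 ++ TF A :: G2))) C.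
Proof.
  destruct 1; simpl.
  - apply d_ax.
  - apply d_overL; assumption.
  - rewrite <- app_assoc. apply d_underL; assumption.
  - apply d_prodL; assumption.
  - apply d_oneL; assumption.
  - apply d_orL; assumption.
  - apply d_andL1; assumption.
  - apply d_andL2; assumption.
  - rewrite fill_comp. apply d_boxL; assumption.
  - apply d_diamL; assumption.
  - apply d_bangL; assumption.
Qed.

Definition stoup_cut (E' E : formula) : Prop :=
  forall c z G1 G2 C, deriv b (fill c (Meta z (G1 ++ TF E :: G2))) C ->
  deriv b (fill c (Meta (z ++ [E']) (G1 ++ G2))) C.

(** * Simultaneous substitution in the right premise *)

Section Substitution.

Variables (A : formula) (xi : stoup) (Pi : list tterm) (E E' : formula).

Definition stoup_repl (x y : formula) : Prop := y = x \/ (x = E /\ y = E').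

(* Any number of occurrences may be replaced, since !C' copies stoup formulas
   into brackets.  The copies of [xi] go in front so that, for [k = 0], the new
   stoup [copies 0 xi ++ z'] reduces to [z']. *)
Inductive subst_meta : meta -> meta -> Prop :=
| sm_intro {z z' L L' k} : Forall2 stoup_repl z z' -> subst_list L L' k ->
    subst_meta (Meta z L) (Meta (copies k xi ++ z') L')
with subst_list : list tterm -> list tterm -> nat -> Prop :=
| sl_nil : subst_list [] [] 0
| sl_keep {X L L' k} : subst_list L L' k -> subst_list (TF X :: L) (TF X :: L') k
| sl_cut {L L' k} : subst_list L L' k -> subst_list (TF A :: L) (Pi ++ L') (S k)
| sl_br {M M' L L' k} : subst_meta M M' -> subst_list L L' k ->
    subst_list (TB M :: L) (TB M' :: L') k.

Lemma stoup_repl_refl z : Forall2 stoup_repl z z.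
Proof. induction z; constructor; [left|]; auto. Qed.

Fixpoint subst_meta_refl (M : meta) : subst_meta M M :=
  match M with
  | Meta z L =>
      sm_intro (stoup_repl_refl z)
        ((fix refl_list (L : list tterm) : subst_list L L 0 :=
            match L with
            | [] => sl_nil
            | TF X :: L' => sl_keep (refl_list L')
            | TB M' :: L' => sl_br (subst_meta_refl M') (refl_list L')
            end) L)
  end.

Lemma subst_list_refl L : subst_list L L 0.
Proof. induction L as [|[X|M] L IH]; constructor; auto using subst_meta_refl. Qed.

Lemma subst_list_app {L1 L1' k1 L2 L2' k2} :
  subst_list L1 L1' k1 -> subst_list L2 L2' k2 -> subst_list (L1 ++ L2) (L1' ++ L2') (k1 + k2).
Proof.
  intros H1 H2; induction H1; simpl; try constructor; auto.
  rewrite <- app_assoc. constructor; auto.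
Qed.

Lemma subst_list_nil_inv L' k : subst_list [] L' k -> L' = [] /\ k = 0.
Proof. inversion 1; auto. Qed.

Lemma subst_list_formula_inv X L L' k : subst_list (TF X :: L) L' k ->
  (exists L'', L' = TF X :: L'' /\ subst_list L L'' k) \/
  (X = A /\ exists L'' k', L' = Pi ++ L'' /\ subst_list L L'' k' /\ k = S k').
Proof. inversion 1; subst; eauto 10. Qed.

Lemma subst_list_bracket_inv M L L' k : subst_list (TB M :: L) L' k ->
  exists M' L'', L' = TB M' :: L'' /\ subst_meta M M' /\ subst_list L L'' k.
Proof. inversion 1; subst; eauto 10. Qed.

Lemma subst_list_app_inv L1 L2 L' k : subst_list (L1 ++ L2) L' k ->
  exists L1' L2' k1 k2, L' = L1' ++ L2' /\ subst_list L1 L1' k1 /\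
    subst_list L2 L2' k2 /\ k = k1 + k2.
Proof.
  revert L' k; induction L1 as [|[X|M] L1 IH]; intros L' k H; simpl in H.
  - exists [], L', 0, k; repeat split; auto; constructor.
  - apply subst_list_formula_inv in H as [(L'' & -> & H) | (-> & L'' & k' & -> & H & ->)];
      destruct (IH _ _ H) as (L1' & L2' & k1 & k2 & -> & H1 & H2 & ->).
    + exists (TF X :: L1'), L2', k1, k2; repeat split; auto; constructor; auto.
    + exists (Pi ++ L1'), L2', (S k1), k2; repeat split; auto.
      * apply app_assoc.
      * constructor; auto.
  - apply subst_list_bracket_inv in H as (M' & L'' & -> & HM & H).
    destruct (IH _ _ H) as (L1' & L2' & k1 & k2 & -> & H1 & H2 & ->).
    exists (TB M' :: L1'), L2', k1, k2; repeat split; auto; constructor; auto.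
Qed.

Lemma subst_meta_inv z L N : subst_meta (Meta z L) N ->
  exists z' L' k, N = Meta (copies k xi ++ z') L' /\
    Forall2 stoup_repl z z' /\ subst_list L L' k.
Proof. inversion 1; subst; eauto 10. Qed.

Definition subst_ctx (c c' : ctx) : Prop :=
  forall M M', subst_meta M M' -> subst_meta (fill c M) (fill c' M').

Lemma subst_ctx_refl c : subst_ctx c c.
Proof.
  intros M M' HM; induction c; simpl; auto.
  apply (@sm_intro _ _ _ _ (0 + 0)); [apply stoup_repl_refl|].
  apply subst_list_app; [apply subst_list_refl | constructor; auto using subst_list_refl].
Qed.

Lemma subst_meta_fill_inv c M N : subst_meta (fill c M) N ->
  exists c' M', N = fill c' M' /\ subst_meta M M' /\ subst_ctx c c'.
Proof.
  revert N; induction c as [|z L1 c IH L2]; intros N H; simpl in H.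
  - exists Hole, N. split; [reflexivity | split; [assumption | intros ? ? ?; assumption]].
  - apply subst_meta_inv in H as (z' & L' & k & -> & HS & HL).
    apply subst_list_app_inv in HL as (L1' & L2' & k1 & k2 & -> & H1 & H2 & ->).
    apply subst_list_bracket_inv in H2 as (M1 & L2'' & -> & HM & H2).
    destruct (IH _ HM) as (c' & M' & -> & HM' & HC).
    exists (InBr (copies (k1 + k2) xi ++ z') L1' c' L2''), M'.
    split; [reflexivity | split; [assumption |]].
    intros X X' HX; simpl. constructor; [assumption |].
    apply subst_list_app; [assumption | constructor; auto].
Qed.

Lemma subst_nonempty {z z' L L' k} :
  xi <> [] \/ Pi <> [] -> Forall2 stoup_repl z z' -> subst_list L L' k ->
  L <> [] \/ z <> [] -> L' <> [] \/ copies k xi ++ z' <> [].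
Proof.
  intros Hne HS HL [HLn|Hz].
  - destruct L as [|[X|M] L]; [congruence| |].
    + apply subst_list_formula_inv in HL as [(L'' & -> & _) | (_ & L'' & k' & -> & _ & ->)].
      * left; discriminate.
      * destruct Hne as [Hxi|HPi]; [right | left]; intro Hnil;
          apply app_eq_nil in Hnil as [Hnil _]; [apply app_eq_nil in Hnil as [Hnil _]|]; auto.
    + apply subst_list_bracket_inv in HL as (M' & L'' & -> & _). left; discriminate.
  - right. intro Hnil. apply app_eq_nil in Hnil as [_ ->]. inversion HS; auto.
Qed.

Hypothesis cut_A : cut_closed (principal_left A) (Meta xi Pi).
Hypothesis cut_E : stoup_cut E' E.
Hypothesis xi_Pi_nonempty : b = true -> xi <> [] \/ Pi <> [].

Definition subst_closed (M : meta) (C : formula) : Prop :=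
  forall N, subst_meta M N -> deriv b N C.

Ltac invert_subst HR :=
  apply subst_meta_fill_inv in HR as (c' & N' & -> & HM & HC);
  apply subst_meta_inv in HM as (z' & L' & k & -> & HS & HL).

Ltac split_subst HL :=
  apply subst_list_app_inv in HL as (L1 & L2 & k1 & k2 & -> & H1 & H2 & ->).

Lemma subst_closed_ax X : subst_closed (Meta [] [TF X]) X.
Proof.
  intros N HR. apply subst_meta_inv in HR as (z' & L' & k & -> & HS & HL).
  inversion HS; subst.
  apply subst_list_formula_inv in HL as [(L'' & -> & HL) | (-> & L'' & k' & -> & HL & ->)];
    apply subst_list_nil_inv in HL as [-> ->].
  - apply d_ax.
  - exact_perm (cut_A _ _ _ _ _ (pl_ax A)).
Qed.

Lemma subst_closed_one : b = false -> subst_closed (Meta [] []) One.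
Proof.
  intros Hb N HR. apply subst_meta_inv in HR as (z' & L' & k & -> & HS & HL).
  inversion HS; subst. apply subst_list_nil_inv in HL as [-> ->]. now apply d_one.
Qed.

Lemma subst_closed_left_rule X Y C c z D1 D2 :
  (forall c z D1 D2, deriv b (fill c (Meta z (D1 ++ Y ++ D2))) C ->
     principal_left X c z D1 D2 C) ->
  subst_closed (fill c (Meta z (D1 ++ Y ++ D2))) C ->
  subst_closed (fill c (Meta z (D1 ++ TF X :: D2))) C.
Proof.
  intros principal IH N HR. invert_subst HR. split_subst HL.
  apply subst_list_formula_inv in H2 as [(L2' & -> & H2) | (-> & L2' & k2' & -> & H2 & ->)];
    pose proof (IH _ (HC _ _ (sm_intro HS
      (subst_list_app H1 (subst_list_app (subst_list_refl Y) H2))))) as IH';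
    pose proof (principal _ _ _ _ IH') as P.
  - exact_perm (principal_left_sound _ _ _ _ _ _ P).
  - exact_perm (cut_A _ _ _ _ _ P).
Qed.

Lemma subst_closed_orL c z D1 D2 X Y C :
  subst_closed (fill c (Meta z (D1 ++ TF X :: D2))) C ->
  subst_closed (fill c (Meta z (D1 ++ TF Y :: D2))) C ->
  subst_closed (fill c (Meta z (D1 ++ TF (Or X Y) :: D2))) C.
Proof.
  intros IHX IHY N HR. invert_subst HR. split_subst HL.
  apply subst_list_formula_inv in H2 as [(L2' & -> & H2) | (HA & L2' & k2' & -> & H2 & ->)];
    pose proof (IHX _ (HC _ _ (sm_intro HS (subst_list_app H1 (sl_keep H2))))) as PX;
    pose proof (IHY _ (HC _ _ (sm_intro HS (subst_list_app H1 (sl_keep H2))))) as PY.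
  - exact_perm (d_orL b _ _ _ _ _ _ _ PX PY).
  - pose proof (pl_or _ _ _ _ _ _ _ PX PY) as P. rewrite HA in P.
    exact_perm (cut_A _ _ _ _ _ P).
Qed.

Lemma subst_closed_boxL c z D1 D2 X C :
  subst_closed (fill c (Meta z (D1 ++ TF X :: D2))) C ->
  subst_closed (fill c (Meta z (D1 ++ TB (Meta [] [TF (BoxInv X)]) :: D2))) C.
Proof.
  intros IH N HR. invert_subst HR. split_subst HL.
  apply subst_list_bracket_inv in H2 as (M1 & L2' & -> & HM1 & H2).
  apply subst_meta_inv in HM1 as (s & LB & j & -> & HSs & HLB). inversion HSs; subst.
  pose proof (IH _ (HC _ _ (sm_intro HS (subst_list_app H1 (sl_keep H2))))) as P.
  apply subst_list_formula_inv in HLB as [(LB' & -> & HLB) | (HA & LB' & j' & -> & HLB & ->)];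
    apply subst_list_nil_inv in HLB as [-> ->].
  - exact_perm (d_boxL b _ _ _ _ _ _ P).
  - pose proof (pl_box _ _ _ _ _ _ P) as Q. rewrite HA in Q.
    pose proof (cut_A _ _ _ _ _ Q) as R. cbn [cut_into] in R. rewrite fill_comp in R.
    exact_perm R.
Qed.

Lemma subst_closed_bangL c z G1 G2 X C :
  subst_closed (fill c (Meta (z ++ [X]) (G1 ++ G2))) C ->
  subst_closed (fill c (Meta z (G1 ++ TF (Bang X) :: G2))) C.
Proof.
  intros IH N HR. invert_subst HR. split_subst HL.
  assert (IH' : forall L2' k2', subst_list G2 L2' k2' ->
    deriv b (fill c' (Meta ((copies (k1 + k2') xi ++ z') ++ [X]) (L1 ++ L2'))) C).
  { intros L2' k2' H2'. rewrite <- app_assoc.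
    exact (IH _ (HC _ _ (sm_intro (Forall2_app HS (stoup_repl_refl [X]))
                                  (subst_list_app H1 H2')))). }
  apply subst_list_formula_inv in H2 as [(L2' & -> & H2) | (HA & L2' & k2' & -> & H2 & ->)].
  - exact_perm (d_bangL b _ _ _ _ _ _ (IH' _ _ H2)).
  - pose proof (pl_bang _ _ _ _ _ _ (IH' _ _ H2)) as Q. rewrite HA in Q.
    exact_perm (cut_A _ _ _ _ _ Q).
Qed.

Lemma subst_closed_bangP c z G1 G2 X C :
  subst_closed (fill c (Meta z (G1 ++ TF X :: G2))) C ->
  subst_closed (fill c (Meta (z ++ [X]) (G1 ++ G2))) C.
Proof.
  intros IH N HR. invert_subst HR.
  apply Forall2_app_inv_l in HS as (w & y & HS & HSy & ->).
  inversion HSy as [|x y' l l' Hy Hnil]; subst; inversion Hnil; subst.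
  split_subst HL.
  pose proof (IH _ (HC _ _ (sm_intro HS (subst_list_app H1 (sl_keep H2))))) as P.
  destruct Hy as [-> | [-> ->]].
  - exact_perm (d_bangP b _ _ _ _ _ _ P).
  - exact_perm (cut_E _ _ _ _ _ P).
Qed.

Lemma subst_closed_perm c z1 z2 G C :
  Permutation z1 z2 ->
  subst_closed (fill c (Meta z1 G)) C -> subst_closed (fill c (Meta z2 G)) C.
Proof.
  intros Hp IH N HR. invert_subst HR.
  destruct (Permutation_Forall2 (Permutation_sym Hp) HS) as (w & Pw & HSw).
  eapply deriv_fill_perm; [exact (IH _ (HC _ _ (sm_intro HSw HL))) | | reflexivity].
  apply Permutation_app_head, Permutation_sym, Pw.
Qed.

Lemma subst_closed_overL c z1 z2 G D1 D2 X Y C :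
  subst_closed (Meta z1 G) Y -> subst_closed (fill c (Meta z2 (D1 ++ TF X :: D2))) C ->
  subst_closed (fill c (Meta (z1 ++ z2) (D1 ++ TF (Over X Y) :: G ++ D2))) C.
Proof.
  intros IHY IHX N HR. invert_subst HR.
  apply Forall2_app_inv_l in HS as (w1 & w2 & HS1 & HS2 & ->). split_subst HL.
  apply subst_list_formula_inv in H2 as [(L2' & -> & H2) | (HA & L2' & k2' & -> & H2 & ->)];
    apply subst_list_app_inv in H2 as (LG & LD & kG & kD & -> & HG & HD & ->);
    pose proof (IHY _ (sm_intro HS1 HG)) as PY;
    pose proof (IHX _ (HC _ _ (sm_intro HS2 (subst_list_app H1 (sl_keep HD))))) as PX.
  - exact_perm (d_overL b _ _ _ _ _ _ _ _ _ PY PX).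
  - pose proof (pl_over _ _ _ _ _ _ _ _ _ PY PX) as P. rewrite HA in P.
    exact_perm (cut_A _ _ _ _ _ P).
Qed.

Lemma subst_closed_underL c z1 z2 G D1 D2 X Y C :
  subst_closed (Meta z1 G) X -> subst_closed (fill c (Meta z2 (D1 ++ TF Y :: D2))) C ->
  subst_closed (fill c (Meta (z1 ++ z2) (D1 ++ G ++ TF (Under X Y) :: D2))) C.
Proof.
  intros IHX IHY N HR. invert_subst HR.
  apply Forall2_app_inv_l in HS as (w1 & w2 & HS1 & HS2 & ->). split_subst HL.
  apply subst_list_app_inv in H2 as (LG & L2' & kG & k2' & -> & HG & H2 & ->).
  apply subst_list_formula_inv in H2 as [(LD & -> & HD) | (HA & LD & kD & -> & HD & ->)];
    pose proof (IHX _ (sm_intro HS1 HG)) as PX;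
    pose proof (IHY _ (HC _ _ (sm_intro HS2 (subst_list_app H1 (sl_keep HD))))) as PY.
  - exact_perm (d_underL b _ _ _ _ _ _ _ _ _ PX PY).
  - pose proof (pl_under _ _ _ _ _ _ _ _ _ PX PY) as P. rewrite HA in P.
    exact_perm (cut_A _ _ _ _ _ P).
Qed.

Lemma subst_closed_overR z G X Y :
  (b = true -> G <> [] \/ z <> []) -> subst_closed (Meta z (G ++ [TF Y])) X ->
  subst_closed (Meta z G) (Over X Y).
Proof.
  intros Hside IH N HR. apply subst_meta_inv in HR as (z' & L' & k & -> & HS & HL).
  apply d_overR.
  - intro Hb. exact (subst_nonempty (xi_Pi_nonempty Hb) HS HL (Hside Hb)).
  - exact_perm (IH _ (sm_intro HS (subst_list_app HL (sl_keep sl_nil)))).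
Qed.

Lemma subst_closed_underR z G X Y :
  (b = true -> G <> [] \/ z <> []) -> subst_closed (Meta z (TF X :: G)) Y ->
  subst_closed (Meta z G) (Under X Y).
Proof.
  intros Hside IH N HR. apply subst_meta_inv in HR as (z' & L' & k & -> & HS & HL).
  apply d_underR.
  - intro Hb. exact (subst_nonempty (xi_Pi_nonempty Hb) HS HL (Hside Hb)).
  - exact (IH _ (sm_intro HS (sl_keep HL))).
Qed.

Lemma subst_closed_prodR z1 z2 G1 G2 X Y :
  subst_closed (Meta z1 G1) X -> subst_closed (Meta z2 G2) Y ->
  subst_closed (Meta (z1 ++ z2) (G1 ++ G2)) (Prod X Y).
Proof.
  intros IHX IHY N HR. apply subst_meta_inv in HR as (z' & L' & k & -> & HS & HL).
  apply Forall2_app_inv_l in HS as (w1 & w2 & HS1 & HS2 & ->). split_subst HL.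
  exact_perm (d_prodR b _ _ _ _ _ _ (IHX _ (sm_intro HS1 H1)) (IHY _ (sm_intro HS2 H2))).
Qed.

Lemma subst_closed_boxR M X : subst_closed (br M) X -> subst_closed M (BoxInv X).
Proof.
  intros IH N HR. apply d_boxR. exact (IH _ (sm_intro (Forall2_nil _) (sl_br HR sl_nil))).
Qed.

Lemma subst_closed_diamR M X : subst_closed M X -> subst_closed (br M) (Diam X).
Proof.
  intros IH N HR. apply subst_meta_inv in HR as (z' & L' & k & -> & HS & HL).
  inversion HS; subst.
  apply subst_list_bracket_inv in HL as (M' & L'' & -> & HM & HL).
  apply subst_list_nil_inv in HL as [-> ->].
  exact (d_diamR b _ _ (IH _ HM)).
Qed.

Lemma subst_closed_bangR X Y : subst_closed (Meta [X] []) Y -> subst_closed (Meta [X] []) (Bang Y).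
Proof.
  intros IH N HR. pose proof (IH _ HR) as P.
  apply subst_meta_inv in HR as (z' & L' & k & -> & HS & HL).
  apply subst_list_nil_inv in HL as [-> ->].
  inversion HS as [|x y l l' _ Hnil]; subst; inversion Hnil; subst.
  exact (d_bangR b _ _ P).
Qed.

Lemma subst_closed_bangC c z z1 G1 G2 G3 X C :
  (b = true -> G2 <> [] \/ z1 <> []) ->
  subst_closed (fill c (Meta (z ++ [X]) (G1 ++ TB (Meta (z1 ++ [X]) G2) :: G3))) C ->
  subst_closed (fill c (Meta (z ++ [X]) (G1 ++ TB (br (Meta z1 G2)) :: G3))) C.
Proof.
  intros Hside IH N HR. invert_subst HR.
  apply Forall2_app_inv_l in HS as (w & y & HS & HSy & ->).
  inversion HSy as [|x y' l l' Hy Hnil]; subst; inversion Hnil; subst.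
  split_subst HL.
  apply subst_list_bracket_inv in H2 as (M1 & L2' & -> & HM1 & H2).
  apply subst_meta_inv in HM1 as (s & LB & j & -> & HSs & HLB). inversion HSs; subst.
  apply subst_list_bracket_inv in HLB as (M2 & LB' & -> & HM2 & HLB).
  apply subst_list_nil_inv in HLB as [-> ->].
  apply subst_meta_inv in HM2 as (v & LG & m & -> & HSv & HG).
  assert (HSX : Forall2 stoup_repl [X] [y']) by (constructor; auto).
  pose proof (IH _ (HC _ _ (sm_intro (Forall2_app HS HSX)
    (subst_list_app H1 (sl_br (sm_intro (Forall2_app HSv HSX) HG) H2))))) as P.
  rewrite !app_assoc in P.
  exact_perm (d_bangC b _ _ _ _ _ _ _ _
    (fun Hb => subst_nonempty (xi_Pi_nonempty Hb) HSv HG (Hside Hb)) P).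
Qed.

Lemma subst_closed_prodL c z D1 D2 X Y C :
  subst_closed (fill c (Meta z (D1 ++ TF X :: TF Y :: D2))) C ->
  subst_closed (fill c (Meta z (D1 ++ TF (Prod X Y) :: D2))) C.
Proof. apply (subst_closed_left_rule _ [TF X; TF Y]). intros; now apply pl_prod. Qed.

Lemma subst_closed_oneL c z D1 D2 C :
  b = false ->
  subst_closed (fill c (Meta z (D1 ++ D2))) C ->
  subst_closed (fill c (Meta z (D1 ++ TF One :: D2))) C.
Proof. intro Hb. apply (subst_closed_left_rule _ []). intros; now apply pl_one. Qed.

Lemma subst_closed_andL1 c z D1 D2 X Y C :
  subst_closed (fill c (Meta z (D1 ++ TF X :: D2))) C ->
  subst_closed (fill c (Meta z (D1 ++ TF (And X Y) :: D2))) C.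
Proof. apply (subst_closed_left_rule _ [TF X]). intros; now apply pl_and1. Qed.

Lemma subst_closed_andL2 c z D1 D2 X Y C :
  subst_closed (fill c (Meta z (D1 ++ TF Y :: D2))) C ->
  subst_closed (fill c (Meta z (D1 ++ TF (And X Y) :: D2))) C.
Proof. apply (subst_closed_left_rule _ [TF Y]). intros; now apply pl_and2. Qed.

Lemma subst_closed_diamL c z D1 D2 X C :
  subst_closed (fill c (Meta z (D1 ++ TB (Meta [] [TF X]) :: D2))) C ->
  subst_closed (fill c (Meta z (D1 ++ TF (Diam X) :: D2))) C.
Proof. apply (subst_closed_left_rule _ [TB (Meta [] [TF X])]). intros; now apply pl_diam. Qed.

Lemma subst_closed_deriv M C : deriv b M C -> subst_closed M C.
Proof.
  induction 1;
    eauto using subst_closed_ax, subst_closed_one, subst_closed_overL, subst_closed_overR,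
      subst_closed_underL, subst_closed_underR, subst_closed_prodL, subst_closed_prodR,
      subst_closed_oneL, subst_closed_orL, subst_closed_andL1, subst_closed_andL2,
      subst_closed_boxL, subst_closed_boxR, subst_closed_diamL, subst_closed_diamR,
      subst_closed_bangL, subst_closed_bangP, subst_closed_bangR, subst_closed_bangC,
      subst_closed_perm.
  all: intros N HR; eauto using deriv.
Qed.

End Substitution.

(** * Cut elimination *)

Lemma stoup_replace E E' : stoup_cut E' E ->
  forall c z G C, deriv b (fill c (Meta (z ++ [E]) G)) C ->
  deriv b (fill c (Meta (z ++ [E']) G)) C.
Proof.
  intros HE c z G C H.
  assert (cut_E : cut_closed (principal_left E) (Meta [] [TF E]))
    by exact (fun Xi zeta G1 G2 C' P => principal_left_sound _ _ _ _ _ _ P).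
  assert (HR : subst_meta E [] [TF E] E E'
                 (fill c (Meta (z ++ [E]) G)) (fill c (Meta (z ++ [E']) G))).
  { apply subst_ctx_refl, (sm_intro _ _ _ _ _ (z' := z ++ [E']) (k := 0));
      [|apply subst_list_refl].
    apply Forall2_app; [apply stoup_repl_refl |].
    constructor; [right; split; reflexivity | constructor]. }
  refine (subst_closed_deriv E [] [TF E] E E' cut_E HE _ _ _ H _ HR).
  right; discriminate.
Qed.

Lemma cut_of_principal A xi Pi :
  cut_closed (principal_left A) (Meta xi Pi) -> (b = true -> xi <> [] \/ Pi <> []) ->
  forall Xi zeta G1 G2 C, deriv b (fill Xi (Meta zeta (G1 ++ TF A :: G2))) C ->
  deriv b (fill Xi (Meta (xi ++ zeta) (G1 ++ Pi ++ G2))) C.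
Proof.
  intros HA Hne Xi zeta G1 G2 C H.
  assert (HAA : stoup_cut A A) by (intros ? ? ? ? ?; apply d_bangP).
  assert (HR : subst_meta A xi Pi A A (fill Xi (Meta zeta (G1 ++ TF A :: G2)))
                 (fill Xi (Meta (copies 1 xi ++ zeta) (G1 ++ Pi ++ G2)))).
  { apply subst_ctx_refl, (sm_intro _ _ _ _ _ (z' := zeta) (k := 0 + 1));
      [apply stoup_repl_refl |].
    apply subst_list_app; [|apply sl_cut]; apply subst_list_refl. }
  exact_perm (subst_closed_deriv A xi Pi A A HA HAA Hne _ _ H _ HR).
Qed.

Definition cut_admissible (A : formula) : Prop :=
  forall xi Pi Xi zeta G1 G2 C, deriv b (Meta xi Pi) A ->
  deriv b (fill Xi (Meta zeta (G1 ++ TF A :: G2))) C ->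
  deriv b (fill Xi (Meta (xi ++ zeta) (G1 ++ Pi ++ G2))) C.

Definition immediate_subformula (X A : formula) : Prop :=
  match A with
  | Under Y Z | Over Y Z | Prod Y Z | And Y Z | Or Y Z => X = Y \/ X = Z
  | Diam Y | BoxInv Y | Bang Y => X = Y
  | _ => False
  end.

Lemma cut_into_hole M : cut_into Hole [] [] [] M = M.
Proof. destruct M; simpl; now rewrite !app_nil_r. Qed.

Lemma cut_reduce_over X Y z G z1 G' z2 D1 D2 Xi C :
  deriv b (Meta z (G ++ [TF Y])) X -> deriv b (Meta z1 G') Y ->
  deriv b (fill Xi (Meta z2 (D1 ++ TF X :: D2))) C ->
  cut_admissible X -> cut_admissible Y ->
  deriv b (fill Xi (Meta (z ++ z1 ++ z2) (D1 ++ G ++ G' ++ D2))) C.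
Proof.
  intros HX HY H cutX cutY.
  pose proof (cutY _ _ Hole _ _ _ _ HY HX) as HX'.
  exact_perm (cutX _ _ _ _ _ _ _ HX' H).
Qed.

Lemma cut_reduce_under X Y z G z1 G' z2 D1 D2 Xi C :
  deriv b (Meta z (TF X :: G)) Y -> deriv b (Meta z1 G') X ->
  deriv b (fill Xi (Meta z2 (D1 ++ TF Y :: D2))) C ->
  cut_admissible X -> cut_admissible Y ->
  deriv b (fill Xi (Meta (z ++ z1 ++ z2) ((D1 ++ G') ++ G ++ D2))) C.
Proof.
  intros HY HX H cutX cutY.
  pose proof (cutX _ _ Hole _ [] _ _ HX HY) as HY'.
  exact_perm (cutY _ _ _ _ _ _ _ HY' H).
Qed.

Lemma cut_reduce_prod X Y z1 G1 z2 G2 z D1 D2 Xi C :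
  deriv b (Meta z1 G1) X -> deriv b (Meta z2 G2) Y ->
  deriv b (fill Xi (Meta z (D1 ++ TF X :: TF Y :: D2))) C ->
  cut_admissible X -> cut_admissible Y ->
  deriv b (fill Xi (Meta ((z1 ++ z2) ++ z) (D1 ++ (G1 ++ G2) ++ D2))) C.
Proof.
  intros HX HY H cutX cutY.
  assert (H' : deriv b (fill Xi (Meta (z1 ++ z) ((D1 ++ G1) ++ TF Y :: D2))) C)
    by exact_perm (cutX _ _ _ _ _ _ _ HX H).
  exact_perm (cutY _ _ _ _ _ _ _ HY H').
Qed.

Lemma cut_reduce_box X xi Pi c z D1 D2 C :
  deriv b (br (Meta xi Pi)) X -> deriv b (fill c (Meta z (D1 ++ TF X :: D2))) C ->
  cut_admissible X ->
  deriv b (fill c (Meta z (D1 ++ TB (Meta xi Pi) :: D2))) C.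
Proof. intros HX H cutX. exact_perm (cutX _ _ _ _ _ _ _ HX H). Qed.

Lemma cut_reduce_diam X xi Pi c z D1 D2 C :
  deriv b (Meta xi Pi) X -> deriv b (fill c (Meta z (D1 ++ TB (Meta [] [TF X]) :: D2))) C ->
  cut_admissible X ->
  deriv b (fill c (Meta z (D1 ++ TB (Meta xi Pi) :: D2))) C.
Proof.
  intros HX H cutX.
  assert (H' : deriv b (fill (ctx_comp c (InBr z D1 Hole D2)) (Meta [] ([] ++ TF X :: []))) C)
    by (rewrite fill_comp; exact H).
  pose proof (cutX _ _ _ _ _ _ _ HX H') as H''. rewrite fill_comp in H''. exact_perm H''.
Qed.

Lemma cut_reduce_bang X Y c z G1 G2 C :
  deriv b (Meta [X] []) Y -> deriv b (fill c (Meta (z ++ [Y]) (G1 ++ G2))) C ->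
  cut_admissible Y ->
  deriv b (fill c (Meta (X :: z) (G1 ++ G2))) C.
Proof.
  intros HY H cutY.
  assert (HE : stoup_cut X Y).
  { intros c' z' L1 L2 C' H'. exact_perm (cutY _ _ _ _ _ _ _ HY H'). }
  exact_perm (stoup_replace Y X HE _ _ _ _ H).
Qed.

Lemma cut_principal_of_subformulas A :
  (forall X, immediate_subformula X A -> cut_admissible X) ->
  forall M, deriv b M A -> cut_closed (principal_left A) M.
Proof.
  intros IH. apply left_rules_commute. intros M HM Xi zeta G1 G2 C HL.
  pose proof (ends_right_sound _ _ HM) as HMd.
  destruct HM; [exact (principal_left_sound _ _ _ _ _ _ HL) |..];
    inversion HL; subst;
    try match goal with
        | |- deriv _ (cut_into Hole [] [] [] _) _ => rewrite cut_into_hole; exact HMd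
        end;
    clear HMd; try (destruct M as [xm pm]); cbn [cut_into br];
    try rewrite fill_comp; cbn [fill app]; rewrite ?app_nil_r.
  all: first
    [ assumption
    | eapply (IH _ (or_introl eq_refl)); eassumption
    | eapply (IH _ (or_intror eq_refl)); eassumption
    | (eapply cut_reduce_over + eapply cut_reduce_under + eapply cut_reduce_prod
       + eapply cut_reduce_box + eapply cut_reduce_diam + eapply cut_reduce_bang);
      try eassumption; apply IH; simpl; auto ].
Qed.

Lemma cut_admissible_of_subformulas A :
  (forall X, immediate_subformula X A -> cut_admissible X) -> cut_admissible A.
Proof.
  intros IH xi Pi Xi zeta G1 G2 C H1 H2.
  apply (cut_of_principal A xi Pi); [exact (cut_principal_of_subformulas A IH _ H1) | | exact H2].
  intro Hb. rewrite Hb in H1.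
  pose proof (deriv_nonempty _ _ H1) as Hne. inversion Hne; tauto.
Qed.

Theorem cut_admissible_all A : cut_admissible A.
Proof.
  induction A; apply cut_admissible_of_subformulas; intros X HX; simpl in HX;
    try contradiction; try destruct HX; subst; assumption.
Qed.

End Calculus.

Lemma tt_onefree_TB M : tt_onefree (TB M) = meta_onefree M.
Proof. destruct M; reflexivity. Qed.

Lemma meta_onefree_fill c M M' :
  meta_onefree (fill c M) = true -> meta_onefree M' = true ->
  meta_onefree M = true /\ meta_onefree (fill c M') = true.
Proof.
  induction c as [|z L1 c IH L2]; cbn [fill]; auto. intros H HM'.
  unfold meta_onefree in H at 1 |- * at 2.
  rewrite forallb_app in *; cbn [forallb] in *. rewrite tt_onefree_TB in *.
  rewrite !andb_true_iff in *. destruct (IH ltac:(tauto) HM'). tauto.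
Qed.

Lemma meta_onefree_cut xi Pi Xi zeta G1 G2 A :
  meta_onefree (Meta xi Pi) = true ->
  meta_onefree (fill Xi (Meta zeta (G1 ++ TF A :: G2))) = true ->
  meta_onefree (fill Xi (Meta (xi ++ zeta) (G1 ++ Pi ++ G2))) = true.
Proof.
  intros H1 H2.
  destruct (meta_onefree_fill _ _ (Meta [] []) H2 eq_refl) as [H3 _].
  apply (meta_onefree_fill _ _ _ H2).
  simpl in *. rewrite !forallb_app, !andb_true_iff in *. simpl in *.
  rewrite !andb_true_iff in *. tauto.
Qed.

Theorem theorem1 (restricted : bool) (xi zeta : stoup) (Pi G1 G2 : list tterm)
  (A C : formula) (Xi : ctx) :
  derivable restricted (Meta xi Pi) A ->
  derivable restricted (fill Xi (Meta zeta (G1 ++ TF A :: G2))) C ->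
  derivable restricted (fill Xi (Meta (xi ++ zeta) (G1 ++ Pi ++ G2))) C.
Proof.
  intros [O1 D1] [O2 D2]. split.
  - intro Hr. destruct (O1 Hr) as [M1 _], (O2 Hr) as [M2 OC].
    split; [exact (meta_onefree_cut _ _ _ _ _ _ _ M1 M2) | exact OC].
  - exact (cut_admissible_all restricted A xi Pi Xi zeta G1 G2 C D1 D2).
Qed.
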